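(* In any principal ideal domain $R$, every completely prime left ideal is structurally prime.
   Context: A principal ideal domain (PID) is a (not necessarily commutative) domain in which every left ideal and every right ideal is principal. A left ideal $\mathfrak{p}$ is completely prime if $\mathfrak{p}\neq R$ and for $a,b\in R$, $ab\in\mathfrak{p}$ and $\mathfrak{p}b\subseteq\mathfrak{p}$ imply $a\in\mathfrak{p}$ or $b\in\mathfrak{p}$. A left ideal $\mathfrak{p}$ is structurally prime if $\mathfrak{p}\neq R$ and for left ideals $A,B$, $AB\subseteq\mathfrak{p}$ implies $A\subseteq\mathfrak{p}$ or $B\subseteq\mathfrak{p}$. *)

From HB Require Import structures.
From mathcomp Require Import all_boot all_order all_algebra.
Set Implicit Arguments. Unset Strict Implicit. Unset Printing Implicit Defensive.
Import GRing.Theory.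
Local Open Scope ring_scope.

Definition left_ideal (R : nzRingType) (I : R -> Prop) : Prop :=
  [/\ I 0, (forall x y, I x -> I y -> I (x + y)),
      (forall x, I x -> I (- x)) & (forall r x, I x -> I (r * x))].

Definition right_ideal (R : nzRingType) (I : R -> Prop) : Prop :=
  [/\ I 0, (forall x y, I x -> I y -> I (x + y)),
      (forall x, I x -> I (- x)) & (forall r x, I x -> I (x * r))].

Definition principal_left (R : nzRingType) (I : R -> Prop) : Prop :=
  exists a : R, forall x, I x <-> exists r, x = r * a.

Definition principal_right (R : nzRingType) (I : R -> Prop) : Prop :=
  exists a : R, forall x, I x <-> exists r, x = a * r.

(* domain: nonzero ring (built into nzRingType) without zero divisors *)
Definition is_domain (R : nzRingType) : Prop :=
  forall a b : R, a * b = 0 -> a = 0 \/ b = 0.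

Definition is_PID (R : nzRingType) : Prop :=
  [/\ is_domain R,
      (forall I : R -> Prop, left_ideal I -> principal_left I) &
      (forall I : R -> Prop, right_ideal I -> principal_right I)].

Inductive ideal_prod (R : nzRingType) (A B : R -> Prop) : R -> Prop :=
  | ip_zero : ideal_prod A B 0
  | ip_mul : forall a b, A a -> B b -> ideal_prod A B (a * b)
  | ip_add : forall x y, ideal_prod A B x -> ideal_prod A B y ->
      ideal_prod A B (x + y).

Definition subset (R : nzRingType) (A B : R -> Prop) : Prop :=
  forall x, A x -> B x.

Definition proper (R : nzRingType) (P : R -> Prop) : Prop :=
  exists x, ~ P x.

Definition completely_prime_left (R : nzRingType) (P : R -> Prop) : Prop :=
  left_ideal P /\ proper P /\
  forall a b : R, P (a * b) -> (forall x, P x -> P (x * b)) -> P a \/ P b.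

Definition structurally_prime_left (R : nzRingType) (P : R -> Prop) : Prop :=
  left_ideal P /\ proper P /\
  forall A B : R -> Prop, left_ideal A -> left_ideal B ->
    subset (ideal_prod A B) P -> subset A P \/ subset B P.

From mathcomp Require Import all_boot all_order all_algebra.
From Stdlib Require Import Classical.
Set Implicit Arguments. Unset Strict Implicit. Unset Printing Implicit Defensive.
Import GRing.Theory.
Local Open Scope ring_scope.

(* Suppose A B ⊆ P with a ∈ A \ P and b ∈ B \ P.  The two-sided ideal
   T = {x | x B ⊆ P} contains a, so its generator c is an invariant element
   (R c = c R) with c ∉ P and c b ∈ P.  Fitting's lemma for the chains
   {y | c^n y ∈ P} (ascending) and R c^n + P (descending, as P ≠ 0) yields
   e with c^N (1 - e) ∈ P and P (1 - e) ⊆ P; complete primeness forces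
   c^N ∈ P, since 1 - e ∈ P would put b in P.  Complete primeness also shows
   that p j ∈ T implies j ∈ T, where P = R p; writing c^N = p w and dividing
   out c one factor at a time gives p w' = 1, so P = R. *)

Definition invariant (R : nzRingType) (c : R) : Prop :=
  forall x : R, (exists r, x = r * c) <-> (exists r, x = c * r).

Definition ideal_quot (R : nzRingType) (P B : R -> Prop) (x : R) : Prop :=
  forall y, B y -> P (x * y).

Section Invariant.
Variables (R : nzRingType) (c : R).
Hypothesis invc : invariant c.

Lemma invariant_mull (r : R) : exists s, r * c = c * s.
Proof. by apply/invc; exists r. Qed.

Lemma invariant_mulr (r : R) : exists s, c * r = s * c.
Proof. by apply/invc; exists r. Qed.

End Invariant.

Lemma invariantX (R : nzRingType) (c : R) n : invariant c -> invariant (c ^+ n).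
Proof.
move=> invc; elim: n => [|n IHn] x.
  by rewrite expr0; split=> -[r ->]; exists r; rewrite ?mulr1 ?mul1r.
split=> -[r ->]; rewrite exprS.
- rewrite mulrA; have [s ->] := invariant_mull invc r.
  rewrite -mulrA; have [t ->] := invariant_mull IHn s.
  by exists t; rewrite mulrA.
- rewrite -mulrA; have [s ->] := invariant_mulr IHn r.
  rewrite mulrA; have [t ->] := invariant_mulr invc s.
  by exists t; rewrite mulrA.
Qed.

Lemma ideal_quot_left_ideal (R : nzRingType) (P B : R -> Prop) :
  left_ideal P -> left_ideal (ideal_quot P B).
Proof.
case=> P0 PD PN PM; split=> [y _|x z Tx Tz y By|x Tx y By|r x Tx y By].
- by rewrite mul0r.
- by rewrite mulrDl; apply: PD; [apply: Tx|apply: Tz].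
- by rewrite mulNr; apply: PN; apply: Tx.
- by rewrite -mulrA; apply: PM; apply: Tx.
Qed.

Lemma ideal_quot_right_ideal (R : nzRingType) (P B : R -> Prop) :
  left_ideal P -> left_ideal B -> right_ideal (ideal_quot P B).
Proof.
move=> idP [_ _ _ BM]; have [Q0 QD QN _] := ideal_quot_left_ideal B idP.
by split=> // r x Tx y By; rewrite -mulrA; apply: Tx; apply: BM.
Qed.

Lemma left_principal_acc (R : nzRingType) (I : nat -> R -> Prop) :
  (forall J : R -> Prop, left_ideal J -> principal_left J) ->
  (forall n, left_ideal (I n)) ->
  (forall n m, (n <= m)%N -> forall x, I n x -> I m x) ->
  exists n0, forall n x, I n x -> I n0 x.
Proof.
move=> princ idI monoI.
pose U x := exists n, I n x.
have idU : left_ideal U.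
  split=> [|x y [n Ix] [m Iy]|x [n Ix]|r x [n Ix]].
  - by exists 0%N; case: (idI 0%N).
  - exists (maxn n m); case: (idI (maxn n m)) => _ ID _ _; apply: ID.
      exact: monoI (leq_maxl n m) _ Ix.
    exact: monoI (leq_maxr n m) _ Iy.
  - by exists n; case: (idI n) => _ _ IN _; apply: IN.
  - by exists n; case: (idI n) => _ _ _ IM; apply: IM.
have [u genU] := princ U idU.
have [n0 Iu] : U u by apply/genU; exists 1; rewrite mul1r.
exists n0 => n x Ix.
have /genU [r ->] : U x by exists n.
by case: (idI n0) => _ _ _ IM; apply: IM.
Qed.

Lemma right_principal_acc (R : nzRingType) (I : nat -> R -> Prop) :
  (forall J : R -> Prop, right_ideal J -> principal_right J) ->
  (forall n, right_ideal (I n)) ->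
  (forall n m, (n <= m)%N -> forall x, I n x -> I m x) ->
  exists n0, forall n x, I n x -> I n0 x.
Proof. exact: (@left_principal_acc R^c). Qed.

Lemma completely_prime_quot_cancel (R : nzRingType) (P B : R -> Prop) (p c : R) :
  completely_prime_left P -> (forall x, P x <-> exists r, x = r * p) ->
  (forall x, ideal_quot P B x <-> exists r, x = c * r) -> ~ P c ->
  forall j, (exists s, p * j = c * s) -> exists s, j = c * s.
Proof.
move=> [[_ _ _ PM] [_ cpP]] genP genT nPc j /genT Tpj; apply/genT => y By.
have Tcj : ideal_quot P B (c * j) by apply/genT; exists j.
have Pc_jy : P (c * (j * y)) by rewrite mulrA; apply: Tcj.
have Pp_jy : P (p * (j * y)) by rewrite mulrA; apply: Tpj.
have P_jy_closed x : P x -> P (x * (j * y)).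
  by move=> /genP [r ->]; rewrite -mulrA; apply: PM.
by case: (cpP _ _ Pc_jy P_jy_closed).
Qed.

Section Domain.
Variable R : nzRingType.
Hypothesis domR : is_domain R.

Lemma dom_mulIf (x a b : R) : x != 0 -> a * x = b * x -> a = b.
Proof.
move=> x0 eq_ab; have : (a - b) * x = 0 by rewrite mulrBl eq_ab subrr.
by case/domR=> [/subr0_eq //|x0']; rewrite x0' eqxx in x0.
Qed.

Lemma dom_mulfI (x a b : R) : x != 0 -> x * a = x * b -> a = b.
Proof.
move=> x0 eq_ab; have : x * (a - b) = 0 by rewrite mulrBr eq_ab subrr.
by case/domR=> [x0'|/subr0_eq //]; rewrite x0' eqxx in x0.
Qed.

Lemma dom_mulr1C (v w : R) : w * v = 1 -> v * w = 1.
Proof.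
move=> wv1; have v0 : v != 0 by apply: contra_eq_neq wv1 => ->; rewrite mulr0 eq_sym oner_neq0.
by apply: (dom_mulIf v0); rewrite -mulrA wv1 mulr1 mul1r.
Qed.

Lemma invariant_dvdl (x u p : R) : invariant x -> x = u * p -> exists v, x = p * v.
Proof.
move=> invx xE; have [u0|u0] := eqVneq u 0; first by exists 0; rewrite xE u0 mul0r mulr0.
have [v uxE] := invariant_mull invx u.
by exists v; apply: (dom_mulfI u0); rewrite uxE xE mulrA.
Qed.

Lemma invariant_dvd1 (c p : R) m : c != 0 -> invariant c ->
  (forall j, (exists s, p * j = c * s) -> exists s, j = c * s) ->
  (exists w, c ^+ m = p * w) -> exists w, 1 = p * w.
Proof.
move=> c0 invc cancel_p; elim: m => [|m IHm] [w cmE]; first by exists w; rewrite -cmE.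
apply: IHm; have [v wE] : exists v, w = c * v.
  by apply: cancel_p; exists (c ^+ m); rewrite -cmE exprS.
have [v' cvE] := invariant_mulr invc v.
by exists v'; apply: (dom_mulIf c0); rewrite -exprSr cmE wE cvE mulrA.
Qed.

End Domain.

Section PrincipalIdealDomain.
Variable R : nzRingType.
Hypothesis domR : is_domain R.
Hypothesis lprinc : forall I : R -> Prop, left_ideal I -> principal_left I.
Hypothesis rprinc : forall I : R -> Prop, right_ideal I -> principal_right I.

(* From R c = e R: e = u c, c = e v and u e = e w with w v = 1, whence e R = c R. *)
Lemma two_sided_generator_invariant (T : R -> Prop) (c : R) :
  right_ideal T -> (forall x, T x <-> exists r, x = r * c) -> c != 0 ->
  invariant c.
Proof.
move=> idT genTl c0; have [e genTr] := rprinc idT.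
have [v cE] : exists v, c = e * v by apply/genTr/genTl; exists 1; rewrite mul1r.
have [u eE] : exists u, e = u * c by apply/genTl/genTr; exists 1; rewrite mulr1.
have [w ueE] : exists w, u * e = e * w.
  by apply/genTr/genTl; exists (u * u); rewrite eE mulrA.
have e0 : e != 0 by apply: contra_neq c0 => e0; rewrite cE e0 mul0r.
have wv1 : w * v = 1.
  by apply: (dom_mulfI domR e0); rewrite mulr1 mulrA -ueE -mulrA -cE -eE.
move=> x; rewrite -(genTl x) (genTr x); split=> -[r ->].
  by exists (w * r); rewrite cE -mulrA (mulrA v) (dom_mulr1C domR wv1) mul1r.
by exists (v * r); rewrite cE mulrA.
Qed.

Lemma left_ideal_dcc_above (J : nat -> R -> Prop) (p : R) : p != 0 ->
  (forall n, left_ideal (J n)) ->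
  (forall n m, (n <= m)%N -> forall x, J m x -> J n x) -> (forall n, J n p) ->
  exists n1, forall m, (n1 <= m)%N -> forall x, J n1 x -> J m x.
Proof.
move=> p0 idJ antiJ Jp.
pose gen n g := forall x, J n x <-> exists t, x = t * g.
have gen_ex n : exists a g, gen n g /\ p = a * g.
  have [g genJ] := lprinc (idJ n).
  by have /genJ [a ->] := Jp n; exists a, g.
(* When J m ⊆ J n, the cofactors a of p = a g grow along the chain as right ideals a R. *)
have cofactor n m a g a' g' : (n <= m)%N -> gen n g -> p = a * g ->
    gen m g' -> p = a' * g' -> exists t, a = a' * t /\ g' = t * g.
  move=> le_nm genn pE genm pE'.
  have /genn [t g'E] : J n g' by apply: antiJ le_nm _ _; apply/genm; exists 1; rewrite mul1r.
  have g0 : g != 0 by apply: contra_neq p0 => g0; rewrite pE g0 mulr0.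
  by exists t; split=> //; apply: (dom_mulIf domR g0); rewrite -pE -mulrA -g'E.
pose V n x := exists a g s, [/\ gen n g, p = a * g & x = a * s].
have idV n : right_ideal (V n).
  split=> [|x y [a [g [s [genn pE ->]]]] [a' [g' [s' [genn' pE' ->]]]]|
           x [a [g [s [genn pE ->]]]]|r x [a [g [s [genn pE ->]]]]].
  - by have [a [g [genn pE]]] := gen_ex n; exists a, g, 0; rewrite mulr0.
  - have [t [a'E _]] := cofactor n n a' g' a g (leqnn n) genn' pE' genn pE.
    by exists a, g, (s + t * s'); rewrite a'E mulrDr mulrA.
  - by exists a, g, (- s); rewrite mulrN.
  - by exists a, g, (s * r); rewrite mulrA.
have monoV n m : (n <= m)%N -> forall x, V n x -> V m x.
  move=> le_nm x [a [g [s [genn pE ->]]]]; have [a' [g' [genm pE']]] := gen_ex m.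
  have [t [aE _]] := cofactor n m a g a' g' le_nm genn pE genm pE'.
  by exists a', g', (t * s); rewrite aE mulrA.
have [n1 stabV] := right_principal_acc rprinc idV monoV.
exists n1 => m le_n1m x Jx.
have [am [gm [genm pmE]]] := gen_ex m.
have /stabV [a1 [g1 [s [gen1 p1E amE]]]] : V m am by exists am, gm, 1; rewrite mulr1.
have [t [a1E gmE]] := cofactor n1 m a1 g1 am gm le_n1m gen1 p1E genm pmE.
have a10 : a1 != 0 by apply: contra_neq p0 => a10; rewrite p1E a10 mul0r.
have st1 : s * t = 1 by apply: (dom_mulfI domR a10); rewrite mulr1 mulrA -amE -a1E.
apply/genm; have /gen1 [r ->] := Jx.
by exists (r * s); rewrite gmE -mulrA (mulrA s) st1 mul1r.
Qed.

Lemma invariant_power_kernel_stable (P : R -> Prop) (c : R) :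
  left_ideal P -> invariant c ->
  exists n0, forall N m y, (n0 <= N)%N -> P (c ^+ m * y) -> P (c ^+ N * y).
Proof.
move=> idP invc; have [P0 PD PN PM] := idP.
pose I n y := P (c ^+ n * y).
have monoI n m : (n <= m)%N -> forall x, I n x -> I m x.
  by move=> le_nm y Iy; rewrite /I -(subnK le_nm) exprD -mulrA; apply: PM.
have idI n : left_ideal (I n).
  split=> [|x y Ix Iy|x Ix|r x Ix]; rewrite /I ?mulr0 ?mulrDr ?mulrN //.
  - exact: PD.
  - exact: PN.
  - rewrite mulrA; have [s ->] := invariant_mulr (invariantX n invc) r.
    by rewrite -mulrA; apply: PM.
have [n0 stabI] := left_principal_acc lprinc idI monoI.
by exists n0 => N m y le_n0N /stabI /(monoI _ _ le_n0N).
Qed.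

(* Fitting's lemma: with e = r' c^N, where r c^N = c^N r', right multiplication
   by 1 - e projects R/P onto its c-torsion part along (R c^N + P)/P. *)
Lemma fitting_element (P : R -> Prop) (c : R) N :
  left_ideal P -> invariant c ->
  (forall m z, P (c ^+ m * z) -> P (c ^+ N * z)) ->
  (exists r, P (c ^+ N - r * c ^+ (N + N))) ->
  exists e, P (c ^+ N * (1 - e)) /\ forall z, P (c ^+ N * z) -> P (z * e).
Proof.
move=> [_ PD PN PM] invc stabN [r Pr].
have invcN := invariantX N invc.
have [r' rE] := invariant_mull invcN r.
have PcNe : P (c ^+ N * (1 - r' * c ^+ N)).
  by rewrite mulrBr mulr1 mulrA -rE -mulrA -exprD.
exists (r' * c ^+ N); split=> // z Pz.
have [z' zE] := invariant_mull invcN (z * r').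
have [z'' cNzE] := invariant_mulr invcN z.
rewrite mulrA zE; apply: (stabN (N + N)%N).
have -> : c ^+ (N + N) * z' = c ^+ N * z - z'' * (c ^+ N * (1 - r' * c ^+ N)).
  by rewrite exprD -mulrA -zE [z'' * _]mulrA -cNzE mulrBr mulr1 opprB addrC subrK !mulrA.
by apply: PD => //; apply: PN; apply: PM.
Qed.

Lemma completely_prime_invariant_power (P : R -> Prop) (c b : R) :
  completely_prime_left P -> invariant c -> ~ P b -> P (c * b) ->
  exists N, P (c ^+ N).
Proof.
move=> [idP [_ cpP]] invc nPb Pcb; have [P0 PD PN PM] := idP.
have [->|c0] := eqVneq c 0; first by exists 1%N; rewrite expr1.
have cb0 : c * b != 0.
  by apply/eqP => /domR [/eqP|b0]; [apply/negP|apply: nPb; rewrite b0].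
pose J n x := exists r, P (x - r * c ^+ n).
have idJ n : left_ideal (J n).
  split=> [|x y [r Px] [s Py]|x [r Px]|t x [r Px]].
  - by exists 0; rewrite mul0r subrr.
  - by exists (r + s); rewrite mulrDl opprD addrACA; apply: PD.
  - by exists (- r); rewrite mulNr -opprD; apply: PN.
  - by exists (t * r); rewrite -mulrA -mulrBr; apply: PM.
have antiJ n m : (n <= m)%N -> forall x, J m x -> J n x.
  by move=> le_nm x [r Px]; exists (r * c ^+ (m - n)); rewrite -mulrA -exprD subnK.
have Jcb n : J n (c * b) by exists 0; rewrite mul0r subr0.
have [n0 stabP] := invariant_power_kernel_stable idP invc.
have [n1 stabJ] := left_ideal_dcc_above cb0 idJ antiJ Jcb.
pose N := maxn n0 n1.
have stabN m z : P (c ^+ m * z) -> P (c ^+ N * z) by apply: stabP; apply: leq_maxl.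
have le_n1N : (n1 <= N)%N := leq_maxr n0 n1.
have JcN : J n1 (c ^+ N) by apply: antiJ le_n1N _ _; exists 1; rewrite mul1r subrr.
have [r Pr] := stabJ (N + N)%N (leq_trans le_n1N (leq_addr N N)) _ JcN.
have [e [PcNe Pe]] := fitting_element idP invc stabN (ex_intro _ r Pr).
have P_1e_closed x : P x -> P (x * (1 - e)).
  by move=> Px; rewrite mulrBr mulr1; apply: PD => //; apply: PN; apply: Pe; apply: PM.
case: (cpP _ _ PcNe P_1e_closed) => [|P1e]; first by exists N.
have Pbe : P (b * e) by apply: Pe; apply: (stabN 1%N); rewrite expr1.
have Pb1e : P (b * (1 - e)) by apply: PM.
by case: nPb; rewrite -[b]mulr1 -(subrK e 1) mulrDr; apply: PD.
Qed.

End PrincipalIdealDomain.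

Theorem proposition3p15 (R : nzRingType) (P : R -> Prop) :
  is_PID R -> completely_prime_left P -> structurally_prime_left P.
Proof.
move=> [domR lprinc rprinc] cpP; have [idP [[z nPz] _]] := cpP.
split=> //; split; first by exists z.
move=> A B _ idB AB_P.
have [|nAP] := classic (forall x, A x -> P x); first by left.
right=> b Bb; apply: NNPP => nPb.
have [a /(imply_to_and (A a)) [Aa nPa]] := not_all_ex_not _ _ nAP.
pose T := ideal_quot P B.
have [c genTl] := lprinc _ (ideal_quot_left_ideal B idP).
have nPc : ~ P c.
  have /genTl [r aE] : T a by move=> y By; apply: AB_P; apply: ip_mul.
  by case: idP => _ _ _ PM /(PM r); rewrite -aE.
have c0 : c != 0 by apply: contra_not_neq nPc => ->; case: idP.
have invc := two_sided_generator_invariant domR rprinc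
  (ideal_quot_right_ideal idP idB) genTl c0.
have genTr x : T x <-> exists r, x = c * r := iff_trans (genTl x) (invc x).
have Tc : T c by apply/genTl; exists 1; rewrite mul1r.
have [N PcN] := completely_prime_invariant_power domR lprinc rprinc cpP invc nPb (Tc b Bb).
have [p genP] := lprinc _ idP.
have [u cNE] := (genP _).1 PcN.
have [w pw1] := invariant_dvd1 domR c0 invc
  (completely_prime_quot_cancel cpP genP genTr nPc)
  (invariant_dvdl domR (invariantX N invc) cNE).
apply: nPz; apply/genP; exists (z * w).
by rewrite -mulrA (dom_mulr1C domR (esym pw1)) mulr1.
Qed.
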